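(* Let $X$ be a collectionwise normal homogeneous space with $\operatorname{ind} X=0$ which has property $\mathcal D$. Then $X$ is strongly discrete homogeneous.
   Context: $X$ is homogeneous if for any $x,y\in X$ there is a homeomorphism $f\colon X\to X$ with $f(x)=y$. A space $X$ is collectionwise normal if it is $T_1$ and for every discrete family $\{F_s\}_{s\in S}$ of closed subsets there is a discrete family $\{V_s\}_{s\in S}$ of open sets with $F_s\subseteq V_s$. $\operatorname{ind}$ is the small inductive dimension. A Hausdorff space $X$ has property $\mathcal D$ if for any proper clopen subsets $F,G$ of $X$ that are homeomorphic, the subspaces $X\setminus F$ and $X\setminus G$ are also homeomorphic. A subset $D$ of $X$ is discrete if each point of $X$ has a neighbourhood containing at most one point of $D$. A Hausdorff space $X$ is strongly discrete homogeneous (sDH) if for any two discrete subsets $A,B$ and any bijection $f\colon A\to B$, $f$ extends to a homeomorphism of $X$ onto itself. *)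

From HB Require Import structures.
From mathcomp Require Import all_boot all_order.
From mathcomp Require Import all_classical topology.
Set Implicit Arguments. Unset Strict Implicit. Unset Printing Implicit Defensive.
Local Open Scope classical_set_scope.

Section Defs.
Variable X : topologicalType.

Definition self_homeo (h : X -> X) : Prop :=
  exists g : X -> X, cancel h g /\ cancel g h /\ continuous h /\ continuous g.

Definition homogeneous : Prop :=
  forall x y : X, exists h : X -> X, self_homeo h /\ h x = y.

Definition homeomorphic_subspaces (A B : set X) : Prop :=
  exists f g : X -> X,
    set_fun A B f /\ set_fun B A g /\
    (forall x, A x -> g (f x) = x) /\ (forall y, B y -> f (g y) = y) /\
    {within A, continuous f} /\ {within B, continuous g}.

Definition T1_space : Prop :=
  forall x y : X, x <> y -> exists U, nbhs x U /\ ~ U y.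

Definition discrete_family (S : Type) (F : S -> set X) : Prop :=
  forall x : X, exists U, nbhs x U /\
    forall s t, U `&` F s !=set0 -> U `&` F t !=set0 -> s = t.

Definition collectionwise_normal : Prop :=
  T1_space /\
  forall (S : Type) (F : S -> set X),
    (forall s, closed (F s)) -> discrete_family F ->
    exists V : S -> set X,
      (forall s, open (V s)) /\ discrete_family V /\ (forall s, F s `<=` V s).

(* ind X = 0: X is nonempty and every point has arbitrarily small open
   neighbourhoods with empty boundary, i.e. clopen neighbourhoods
   (ind of the empty space being -1) *)
Definition ind_eq0 : Prop :=
  [set: X] !=set0 /\
  forall (x : X) (V : set X), open V -> V x ->
    exists U : set X, open U /\ U x /\ U `<=` V /\ closure U `\` U = set0.

Definition clopen_set (A : set X) : Prop := open A /\ closed A.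

Definition property_D : Prop :=
  hausdorff_space X /\
  forall F G : set X, clopen_set F -> clopen_set G ->
    F <> setT -> G <> setT ->
    homeomorphic_subspaces F G -> homeomorphic_subspaces (~` F) (~` G).

Definition discrete_subset (D : set X) : Prop :=
  forall x : X, exists U, nbhs x U /\
    forall a b, D a -> D b -> U a -> U b -> a = b.

Definition sDH : Prop :=
  hausdorff_space X /\
  forall (A B : set X) (f : X -> X),
    discrete_subset A -> discrete_subset B -> set_bij A B f ->
    exists h : X -> X, self_homeo h /\ (forall a, A a -> h a = f a).
End Defs.

From mathcomp Require Import all_boot all_classical topology.
Set Implicit Arguments. Unset Strict Implicit. Unset Printing Implicit Defensive.
Local Open Scope classical_set_scope.

(** Collectionwise normality separates the points of a discrete set A by a
    discrete family of open sets, and ind X = 0 shrinks these to clopen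
    neighbourhoods U a, small enough that a homeomorphism h_a of X with
    h_a a = f a (homogeneity) maps them into a discrete family of clopen sets
    around the points of B.  Gluing the h_a gives a homeomorphism between the
    clopen sets W = \bigcup_a U a and W' = \bigcup_a h_a (U a) extending f,
    and property D extends it by a homeomorphism of the complements, provided
    W and W' are proper.  If some point p lies outside A and B, we arrange
    this by working inside X \ {p}; otherwise X = A u B is discrete, and
    there property D forbids a homeomorphism of X onto a proper subset. *)

Lemma exists_glued_map (S T : Type) (E : S -> set T) (k : S -> T -> T) :
  (forall i j x, E i x -> E j x -> i = j) ->
  exists phi, forall i x, E i x -> phi x = k i x.
Proof.
move=> disjE; have /choice [phi phiE] : forall x, exists y,
    forall i, E i x -> y = k i x.
  move=> x; have [[i Eix]|noE] := pselect (exists i, E i x).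
    by exists (k i x) => j Ejx; rewrite (disjE i j x).
  by exists x => i Eix; case: noE; exists i.
by exists phi => i x /phiE.
Qed.

Section Topology.
Variable X : topologicalType.

Lemma continuous_at_eq_on_nbhs (Y : topologicalType) (f g : X -> Y)
    (N : set X) (x : X) :
  nbhs x N -> (forall y, N y -> f y = g y) -> {for x, continuous g} ->
  {for x, continuous f}.
Proof.
move=> Nx fg gx; rewrite /prop_for /continuous_at (fg x (nbhs_singleton Nx)).
apply: cvg_trans gx; apply: near_eq_cvg.
by apply: filterS Nx => y /fg ->.
Qed.

Lemma T1_closed_set1 : T1_space X -> forall x : X, closed [set x].
Proof.
move=> T1 x; rewrite -openC openE => y yx.
have [U [Uy nUx]] := T1 y x yx.
by apply: filterS Uy => z Uz zx; apply: nUx; rewrite -zx.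
Qed.

Lemma discrete_subset_nbhs (D : set X) : T1_space X -> discrete_subset D ->
  forall x, exists2 N, nbhs x N & forall y, N y -> D y -> y = x.
Proof.
move=> T1 dD x; have [U [Ux Uu]] := dD x.
have [[b [Db Ub bx]]|noD] := pselect (exists b, [/\ D b, U b & b <> x]).
  exists (U `&` ~` [set b]) => [|y [Uy nyb] Dy]; last by case: nyb; exact: Uu.
  apply: filterI Ux _; apply: open_nbhs_nbhs; split; last exact: nesym.
  by rewrite openC; exact: T1_closed_set1.
exists U => // y Uy Dy; apply: contrapT => yx; apply: noD; exists y.
by split.
Qed.

Lemma nbhs_set1_of_discrete_cover (A B : set X) :
  T1_space X -> discrete_subset A -> discrete_subset B ->
  (forall x, A x \/ B x) -> forall x : X, nbhs x [set x].
Proof.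
move=> T1 dA dB AB x.
have [NA NAx NAu] := discrete_subset_nbhs T1 dA x.
have [NB NBx NBu] := discrete_subset_nbhs T1 dB x.
apply: filterS (filterI NAx NBx) => y [NAy NBy].
by case: (AB y) => [/(NAu y NAy)|/(NBu y NBy)].
Qed.

Lemma nbhs_set1_open :
  (forall x : X, nbhs x [set x]) -> forall U : set X, open U.
Proof.
by move=> dX U; rewrite openE => x Ux; apply: filterS (dX x) => y ->.
Qed.

Lemma nbhs_set1_continuous (Y : topologicalType) :
  (forall x : X, nbhs x [set x]) -> forall f : X -> Y, continuous f.
Proof.
move=> dX f x V /= fV; apply: filterS (dX x) => y -> /=.
exact: nbhs_singleton fV.
Qed.

Lemma discrete_family_disjoint (S : Type) (V : S -> set X) :
  discrete_family V -> forall s t x, V s x -> V t x -> s = t.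
Proof.
move=> dV s t x Vsx Vtx; have [U [Ux Uu]] := dV x.
by apply: Uu; exists x; split => //; exact: nbhs_singleton.
Qed.

Lemma discrete_family_reindex (S T : Type) (V : T -> set X) (E : S -> set X)
    (k : S -> T) :
  discrete_family V -> (forall s, E s `<=` V (k s)) ->
  (forall s t, E s !=set0 -> E t !=set0 -> k s = k t -> s = t) ->
  discrete_family E.
Proof.
move=> dV EV kinj x; have [U [Ux Uu]] := dV x; exists U; split => // s t.
have meet r : U `&` E r !=set0 -> U `&` V (k r) !=set0 /\ E r !=set0.
  by case=> y [Uy Ery]; split; exists y => //; split => //; exact: EV.
move=> /meet [UVs Es] /meet [UVt Et]; exact: kinj Es Et (Uu _ _ UVs UVt).
Qed.

Lemma closed_bigcup_discrete (S : Type) (E : S -> set X) :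
  (forall i, closed (E i)) -> discrete_family E -> closed (\bigcup_i E i).
Proof.
move=> cE dE; rewrite -openC openE => y nEy; have [N [Ny Nu]] := dE y.
have [[i NEi]|noE] := pselect (exists i, N `&` E i !=set0).
  have nEiy : nbhs y (~` E i).
    apply: open_nbhs_nbhs; split; first by rewrite openC.
    by move=> Eiy; apply: nEy; exists i.
  apply: filterS (filterI Ny nEiy) => z [Nz nEiz] [j _ Ejz]; apply: nEiz.
  by rewrite (Nu i j NEi) //; exists z.
by apply: filterS Ny => z Nz [j _ Ejz]; apply: noE; exists j, z.
Qed.

Lemma clopen_bigcup_discrete (S : Type) (E : S -> set X) :
  (forall i, clopen_set (E i)) -> discrete_family E ->
  clopen_set (\bigcup_i E i).
Proof.
move=> cE dE; split; first by apply: bigcup_open => i _; exact: (cE i).1.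
by apply: closed_bigcup_discrete => // i; exact: (cE i).2.
Qed.

Lemma discrete_subset_separation (D : set X) :
  collectionwise_normal X -> discrete_subset D ->
  exists V : X -> set X,
    [/\ forall x, open (V x), forall x, D x -> V x x & discrete_family V].
Proof.
move=> [T1 cwn] dD; pose F x := D `&` [set x].
have cF x : closed (F x).
  have [Dx|nDx] := pselect (D x).
    suff -> : F x = [set x] by exact: T1_closed_set1.
    by apply/seteqP; split => [y []|y ->].
  suff -> : F x = set0 by exact: closed0.
  by apply/seteqP; split => // y [Dy yx]; apply: nDx; rewrite -yx.
have dF : discrete_family F.
  move=> z; have [U [Uz Uu]] := dD z; exists U; split => //.
  by move=> s t [a [Ua [Da <-]]] [b [Ub [Db <-]]]; exact: Uu.
have [V [oV [dV FV]]] := cwn X F cF dF.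
by exists V; split => // x Dx; apply: (FV x x).
Qed.

Lemma ind_eq0_clopen_nbhs (V : set X) (x : X) : ind_eq0 X -> open V -> V x ->
  exists U, [/\ clopen_set U, U x & U `<=` V].
Proof.
move=> [_ ind] oV Vx; have [U [oU [Ux [UV]]]] := ind x V oV Vx.
by rewrite setD_eq0 => clU; exists U.
Qed.

Lemma homogeneous_homeo_family (f : X -> X) : homogeneous X ->
  exists h g : X -> X -> X, forall x,
    [/\ cancel (h x) (g x), cancel (g x) (h x), continuous (h x),
        continuous (g x) & h x x = f x].
Proof.
move=> hom; have /choice [hg hgP] : forall x, exists p : (X -> X) * (X -> X),
    [/\ cancel p.1 p.2, cancel p.2 p.1, continuous p.1, continuous p.2
      & p.1 x = f x].
  by move=> x; have [h [[g [? [? [? ?]]]] ?]] := hom x (f x); exists (h, g).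
by exists (fun x => (hg x).1), (fun x => (hg x).2).
Qed.

(* Unlike in [homeomorphic_subspaces], continuity is taken in X at the points
   of W and W'; for open W, W' the two agree (homeomorphic_subspacesP). *)
Variant subspace_homeo (W W' : set X) (phi psi : X -> X) : Prop :=
  SubspaceHomeo of set_fun W W' phi & set_fun W' W psi
  & (forall x, W x -> psi (phi x) = x) & (forall y, W' y -> phi (psi y) = y)
  & {in W, continuous phi} & {in W', continuous psi}.

Lemma subspace_homeo_sym W W' phi psi :
  subspace_homeo W W' phi psi -> subspace_homeo W' W psi phi.
Proof. by case. Qed.

Lemma subspace_homeo_setT phi psi :
  subspace_homeo setT setT phi psi -> self_homeo phi.
Proof.
move=> [_ _ K1 K2 c1 c2]; exists psi.
split; [|split; [|split]] => x; [exact: K1|exact: K2|exact/c1/in_setT|].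
exact/c2/in_setT.
Qed.

Lemma homeomorphic_subspacesP (W W' : set X) : open W -> open W' ->
  homeomorphic_subspaces W W' <-> exists phi psi, subspace_homeo W W' phi psi.
Proof.
move=> oW oW'; split.
  move=> [phi [psi [fW [fW' [K1 [K2 [c1 c2]]]]]]]; exists phi, psi.
  by rewrite !continuous_open_subspace in c1 c2.
move=> [phi [psi [fW fW' K1 K2 c1 c2]]]; exists phi, psi.
by rewrite !continuous_open_subspace.
Qed.

Section Gluing.
Variables (S : Type) (E : S -> set X) (h g : S -> X -> X).
Hypotheses (hgK : forall i, cancel (h i) (g i))
  (ghK : forall i, cancel (g i) (h i)).
Hypotheses (hC : forall i, continuous (h i)) (gC : forall i, continuous (g i)).
Hypothesis oE : forall i, open (E i).
Hypothesis disjE : forall i j x, E i x -> E j x -> i = j.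
Hypothesis disjE' : forall i j y, E i (g i y) -> E j (g j y) -> i = j.

Lemma glued_subspace_homeo : exists phi psi,
  subspace_homeo (\bigcup_i E i) (\bigcup_i g i @^-1` E i) phi psi /\
  forall i x, E i x -> phi x = h i x.
Proof.
have [phi phiE] := exists_glued_map h disjE.
have [psi psiE] := exists_glued_map (E := fun i => g i @^-1` E i) g disjE'.
have hE i x : E i x -> E i (g i (h i x)) by rewrite hgK.
exists phi, psi; split => //; split.
- by move=> x [i _ Eix]; exists i => //=; rewrite (phiE i) //; exact: hE.
- by move=> y [i _ Eiy]; exists i => //; rewrite (psiE i).
- by move=> x [i _ Eix]; rewrite (phiE i) // (psiE i) ?hgK //; exact: hE.
- by move=> y [i _ Eiy]; rewrite (psiE i) // (phiE i) ?ghK.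
- move=> x /set_mem [i _ Eix]; apply: (continuous_at_eq_on_nbhs (N := E i)).
  + exact: open_nbhs_nbhs.
  + exact: phiE.
  + exact: hC.
- move=> y /set_mem [i _ Eiy].
  apply: (continuous_at_eq_on_nbhs (N := g i @^-1` E i)).
  + by apply: open_nbhs_nbhs; split => //; exact: (continuousP _).1.
  + exact: psiE.
  + exact: gC.
Qed.

End Gluing.

Lemma continuous_patch_clopen (Y : topologicalType) (W : set X)
    (p phi : X -> Y) :
  clopen_set W -> {in W, continuous phi} -> {in ~` W, continuous p} ->
  continuous (patch p W phi).
Proof.
move=> [oW cW] cphi cp x; have [Wx|nWx] := pselect (W x).
  apply: (continuous_at_eq_on_nbhs (N := W)); first exact: open_nbhs_nbhs.
    by move=> y Wy; rewrite patchT ?inE.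
  exact/cphi/mem_set.
apply: (continuous_at_eq_on_nbhs (N := ~` W)).
- by apply: open_nbhs_nbhs; rewrite /open_nbhs openC.
- by move=> y nWy; rewrite patchC ?inE.
- exact/cp/mem_set.
Qed.

Lemma subspace_homeo_patch (W W' : set X) phi psi p q :
  clopen_set W -> clopen_set W' -> subspace_homeo W W' phi psi ->
  subspace_homeo (~` W) (~` W') p q -> self_homeo (patch p W phi).
Proof.
move=> cW cW' [fW fW' K1 K2 c1 c2] [fC fC' KC1 KC2 cC1 cC2].
exists (patch q W' psi); split; [|split; [|split]].
- move=> x; have [Wx|nWx] := pselect (W x).
    by rewrite (patchT _ _ (mem_set Wx)) (patchT _ _ (mem_set (fW x Wx))) K1.
  have {}nWx : (~` W) x := nWx.
  by rewrite (patchC _ _ (mem_set nWx)) (patchC _ _ (mem_set (fC x nWx))) KC1.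
- move=> y; have [W'y|nW'y] := pselect (W' y).
    by rewrite (patchT _ _ (mem_set W'y)) (patchT _ _ (mem_set (fW' y W'y))) K2.
  have {}nW'y : (~` W') y := nW'y.
  by rewrite (patchC _ _ (mem_set nW'y)) (patchC _ _ (mem_set (fC' y nW'y))) KC2.
- exact: continuous_patch_clopen.
- exact: continuous_patch_clopen.
Qed.

Lemma subspace_homeo_extend (W W' : set X) phi psi : property_D X ->
  clopen_set W -> clopen_set W' -> (W = setT <-> W' = setT) ->
  subspace_homeo W W' phi psi ->
  exists h, self_homeo h /\ forall x, W x -> h x = phi x.
Proof.
move=> [_ D] cW cW' WW' hWW'; have [WT|nW] := pselect (W = setT).
  exists phi; split => //; move: hWW'.
  by rewrite WT (WW'.1 WT); exact: subspace_homeo_setT.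
have nW' : W' <> setT by move/WW'.2.
have [p [q hC]] : exists p q, subspace_homeo (~` W) (~` W') p q.
  apply/homeomorphic_subspacesP; rewrite ?openC; [exact: cW.2|exact: cW'.2|].
  apply: D => //; apply/homeomorphic_subspacesP; [exact: cW.1|exact: cW'.1|].
  by exists phi, psi.
exists (patch p W phi); split; first exact: subspace_homeo_patch hWW' hC.
by move=> x Wx; rewrite patchT ?inE.
Qed.

(* Property D applied to X \ {y0} and W' \ {phi y0} would make the point
   {y0} homeomorphic to a set containing both y0 and phi y0. *)
Lemma discrete_subspace_homeo_setT (W' : set X) phi psi :
  (forall x : X, nbhs x [set x]) -> property_D X ->
  subspace_homeo setT W' phi psi -> W' = setT.
Proof.
move=> dX [_ D] [fW _ K1 K2 _ _]; apply/seteqP; split => // y0 _.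
apply: contrapT => nW'y0.
have phi_inj x : phi x = phi y0 -> x = y0 by move=> e; rewrite -(K1 x I) e K1.
have hFG : homeomorphic_subspaces (~` [set y0]) (W' `&` ~` [set phi y0]).
  exists phi, psi; split; [|split; [|split; [|split; [|split]]]].
  - by move=> x nx; split; [exact: fW|move/phi_inj; exact: nx].
  - by move=> y [W'y ny] e; case: ny; rewrite -e K2.
  - by move=> x _; exact: K1.
  - by move=> y [W'y _]; exact: K2.
  - exact/continuous_subspaceT/nbhs_set1_continuous.
  - exact/continuous_subspaceT/nbhs_set1_continuous.
have cl (U : set X) : clopen_set U.
  by split; [|rewrite -openC]; exact: nbhs_set1_open.
have nF : ~` [set y0] <> setT by move/seteqP => [_ /(_ y0 I)]; apply.
have nG : W' `&` ~` [set phi y0] <> setT.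
  by move/seteqP => [_ /(_ (phi y0) I) [_]]; apply.
have [p [q [_ [fq [_ [Kq _]]]]]] := D _ _ (cl _) (cl _) nF nG hFG.
have G1 : (~` (W' `&` ~` [set phi y0])) y0 by case.
have G2 : (~` (W' `&` ~` [set phi y0])) (phi y0) by move=> [_]; apply.
have q1 : q y0 = y0 := contrapT (fq y0 G1).
have q2 : q (phi y0) = y0 := contrapT (fq _ G2).
apply: nW'y0; rewrite -(Kq y0 G1) q1 -{1}q2 (Kq _ G2); exact: fW.
Qed.

Section Extension.
Hypotheses (cwn : collectionwise_normal X) (hom : homogeneous X).
Hypothesis ind : ind_eq0 X.
Variables (A B O : set X) (f : X -> X).
Hypotheses (dA : discrete_subset A) (dB : discrete_subset B).
Hypotheses (fAB : set_fun A B f) (injf : set_inj A f).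
Hypotheses (oO : open O) (AO : A `<=` O) (BO : B `<=` O).

Lemma discrete_injection_clopen_homeo : exists W W' phi psi,
  [/\ clopen_set W, clopen_set W', W `<=` O /\ W' `<=` O,
      subspace_homeo W W' phi psi & forall a, A a -> W a /\ phi a = f a].
Proof.
have [V [oV AV dV]] := discrete_subset_separation cwn dA.
have [V' [oV' BV' dV']] := discrete_subset_separation cwn dB.
have [h [g hgP]] := homogeneous_homeo_family f hom.
have hgK x : cancel (h x) (g x) by case: (hgP x).
have ghK x : cancel (g x) (h x) by case: (hgP x).
have hC x : continuous (h x) by case: (hgP x).
have gC x : continuous (g x) by case: (hgP x).
have hxx x : h x x = f x by case: (hgP x).
pose N x := V x `&` O `&` h x @^-1` (V' (f x) `&` O).
have /choice [U UP] : forall x, exists U,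
    [/\ clopen_set U, U `<=` N x, A x -> U x & ~ A x -> U = set0].
  move=> x; have [Ax|nAx] := pselect (A x); last first.
    by exists set0; split => //; exact: clopen0.
  have oN : open (N x).
    apply: openI; first exact: openI.
    by apply: (continuousP _).1 => //; exact: openI.
  have Nx : N x x.
    split; first by split; [exact: AV|exact: AO].
    by rewrite /= hxx; split; [exact/BV'/fAB|exact/BO/fAB].
  have [U [cU Ux UN]] := ind_eq0_clopen_nbhs ind oN Nx.
  by exists U; split.
have cU i : clopen_set (U i) by case: (UP i).
have UN i : U i `<=` N i by case: (UP i).
have AU i : A i -> U i i by case: (UP i).
have U0 i : U i !=set0 -> A i.
  case: (UP i) => _ _ _ nAU [y Uy]; apply: contrapT => /nAU U0.
  by rewrite U0 in Uy.
pose E' i := g i @^-1` U i.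
have E'V' i : E' i `<=` V' (f i) `&` O by move=> y /UN [_] /=; rewrite ghK.
have dU : discrete_family U.
  by apply: (discrete_family_reindex (k := id) dV) => // i y /UN [[]].
have dE' : discrete_family E'.
  apply: (discrete_family_reindex (k := f) dV') => [i y /E'V' []//|s t Es Et].
  have E'0 i : E' i !=set0 -> A i by move=> [y Ey]; apply: U0; exists (g i y).
  by apply: injf; rewrite inE; exact: E'0.
have [phi [psi [hWW' phiE]]] := glued_subspace_homeo hgK ghK hC gC
  (fun i => (cU i).1) (discrete_family_disjoint dU)
  (discrete_family_disjoint dE').
exists (\bigcup_i U i), (\bigcup_i E' i), phi, psi; split => //.
- exact: clopen_bigcup_discrete.
- apply: clopen_bigcup_discrete dE' => i; split.
    exact: (continuousP _).1 (gC i) _ (cU i).1.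
  exact: (continuous_closedP _).1 (gC i) _ (cU i).2.
- by split=> y [i _]; [move=> /UN [[]]|move=> /E'V' []].
- move=> a Aa; split; first by exists a => //; exact: AU.
  by rewrite (phiE a) ?hxx //; exact: AU.
Qed.

Lemma discrete_injection_extends : property_D X ->
  (forall W W' phi psi, W `<=` O -> W' `<=` O ->
    subspace_homeo W W' phi psi -> (W = setT <-> W' = setT)) ->
  exists h, self_homeo h /\ forall a, A a -> h a = f a.
Proof.
move=> PD WW'.
have [W [W' [phi [psi [cW cW' [WO W'O] hWW' phiA]]]]] :=
  discrete_injection_clopen_homeo.
have [h [hh hE]] :=
  subspace_homeo_extend PD cW cW' (WW' _ _ _ _ WO W'O hWW') hWW'.
by exists h; split => // a Aa; have [Wa <-] := phiA a Aa; exact: hE.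
Qed.

End Extension.
End Topology.

Theorem mainTheorem5 (X : topologicalType) :
  collectionwise_normal X -> homogeneous X -> ind_eq0 X -> property_D X ->
  sDH X.
Proof.
move=> cwn hom ind PD; have T1 := cwn.1; split; first exact: PD.1.
move=> A B f dA dB [fAB injf _].
have [AB|/existsNP [p /not_orP [nAp nBp]]] := pselect (forall x, A x \/ B x).
  have dX := nbhs_set1_of_discrete_cover T1 dA dB AB.
  apply: (discrete_injection_extends cwn hom ind dA dB fAB injf openT) => //.
  move=> W W' phi psi _ _ hWW'; split=> [WT|W'T].
    by rewrite WT in hWW'; exact: discrete_subspace_homeo_setT dX PD hWW'.
  move/subspace_homeo_sym: hWW'; rewrite W'T.
  exact: discrete_subspace_homeo_setT dX PD.
have oO : open (~` [set p]) by rewrite openC; exact: T1_closed_set1.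
apply: (discrete_injection_extends cwn hom ind dA dB fAB injf oO) => //.
- by move=> a Aa ap; apply: nAp; rewrite -ap.
- by move=> b Bb bp; apply: nBp; rewrite -bp.
- move=> W W' phi psi WO W'O _.
  have proper (Z : set X) : Z `<=` ~` [set p] -> Z <> setT.
    by move=> ZO /seteqP [_ /(_ p I) /ZO]; apply.
  by split=> [/(proper _ WO)|/(proper _ W'O)].
Qed.
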